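(* If $H$ is a finite graph, then there exists a $3$-edge-coloring $c:E(H)\to\{1,2,3\}$ of $H$ such that every vertex $v$ with $d_H(v)\ge 4$ is majority colored.
   Context: A vertex $v$ is majority colored if for every color $\alpha$, the number of edges incident to $v$ colored $\alpha$ is at most the number of edges incident to $v$ not colored $\alpha$. *)

From mathcomp Require Import all_boot.
Set Implicit Arguments. Unset Strict Implicit. Unset Printing Implicit Defensive.

(* A finite simple graph: vertex type V (a finType) with a symmetric,
   irreflexive adjacency relation e.
   An edge-colouring with k colours is a function c : V -> V -> 'I_k that is
   symmetric (c x y = c y x), so that it is well defined on unordered edges;
   only its values on edges (e x y) matter. *)

Definition deg (V : finType) (e : rel V) (v : V) : nat := #|[set u | e v u]|.

Definition col_deg (V : finType) (e : rel V) (k : nat) (c : V -> V -> 'I_k)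
  (v : V) (a : 'I_k) : nat := #|[set u | e v u && (c v u == a)]|.

Definition noncol_deg (V : finType) (e : rel V) (k : nat) (c : V -> V -> 'I_k)
  (v : V) (a : 'I_k) : nat := #|[set u | e v u && (c v u != a)]|.

Definition majority_colored (V : finType) (e : rel V) (k : nat)
  (c : V -> V -> 'I_k) (v : V) : Prop :=
  forall a : 'I_k, col_deg e c v a <= noncol_deg e c v a.

From mathcomp Require Import all_boot zify.
Set Implicit Arguments. Unset Strict Implicit. Unset Printing Implicit Defensive.

(* Split each vertex v of a digraph into an out-port and an in-port; the arcs then
   form a bipartite multigraph, which has an equitable edge-colouring (de Werra): at
   every port any two colour classes differ in size by at most one. A colouring that
   minimises the sum of the squared colour degrees is equitable: if colour al exceeds be by
   two at some port, the al/be-alternating walk from it reaches a port with the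
   opposite imbalance, and swapping al and be along a shortest such path lowers the sum.
   Orient the graph arbitrarily and colour it equitably with two colours; reversing
   the edges of one colour yields an orientation with |d+(v) - d-(v)| <= 2. In an
   equitable 3-colouring of that orientation each colour occurs at most
   (d+(v) + 2)/3 + (d-(v) + 2)/3 times at v, which is at most d(v)/2 when d(v) >= 4. *)

Lemma sum_card_fibers (T M : finType) (A : pred T) (f : T -> M) (Z : {set M}) :
  \sum_(y in Z) #|[set x | A x && (f x == y)]| = #|[set x | A x && (f x \in Z)]|.
Proof.
rewrite -sum1dep_card (partition_big f (mem Z)) => [|x /andP[]//].
apply: eq_bigr => y yZ; rewrite -sum1dep_card; apply: eq_bigl => x.
by case: eqP => [->|]; rewrite ?yZ ?andbT ?andbF.
Qed.

Lemma card_set_sum (T : finType) (A : pred T) : #|[set x | A x]| = \sum_x (A x : nat).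
Proof. by rewrite -sum1dep_card big_mkcond; apply: eq_bigr => x _; case: (A x). Qed.

Lemma sum_pairE (T1 T2 : finType) (F : T1 * T2 -> nat) :
  \sum_p F p = \sum_x \sum_y F (x, y).
Proof. by rewrite pair_bigA; apply: eq_bigr => [[]]. Qed.

Lemma equitable_mul_le k (f : 'I_k -> nat) a :
  (forall b, f a <= (f b).+1) -> k * f a <= \sum_b f b + k.-1.
Proof.
move=> fa_le; rewrite -{1}[k]card_ord -sum_nat_const (bigD1 a) //=.
rewrite [\sum_b f b](bigD1 a) //= -addnA leq_add2l.
have -> : k.-1 = \sum_(b | b != a) 1 by rewrite sum1_card cardC1 card_ord.
rewrite -big_split /=.
by apply: leq_sum => b _; rewrite addn1.
Qed.

Section ArcReversal.
Variables (A N : finType) (Q : pred A).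

Definition arc_deg (f : A -> N) (n : N) := #|[set x | Q x && (f x == n)]|.

Definition arc (t h : A -> N) : rel N :=
  fun n m => [exists x, Q x && (t x == n) && (h x == m)].

Definition reverse_on (F : {set A}) (f g : A -> N) x := if x \in F then g x else f x.

Lemma arc_deg_update (f g : A -> N) x0 n : Q x0 -> (forall x, x != x0 -> f x = g x) ->
  arc_deg f n + (g x0 == n) = arc_deg g n + (f x0 == n).
Proof.
move=> Qx0 fg; rewrite /arc_deg (cardsD1 x0) [in RHS](cardsD1 x0) !inE Qx0 /=.
have -> : [set x | Q x && (f x == n)] :\ x0 = [set x | Q x && (g x == n)] :\ x0.
  by apply/setP => x; rewrite !inE; case: eqP => //= /eqP /fg ->.
lia.
Qed.

Lemma reach_indeg_gt t h n0 : arc_deg h n0 < arc_deg t n0 ->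
  exists2 y, connect (arc t h) n0 y & arc_deg t y < arc_deg h y.
Proof.
move=> surplus.
have [/existsP[y /andP[]]|/existsPn no_deficit] :=
  boolP [exists y, connect (arc t h) n0 y && (arc_deg t y < arc_deg h y)].
  by exists y.
pose Z := [set y | connect (arc t h) n0 y].
have closed : [set x | Q x && (t x \in Z)] \subset [set x | Q x && (h x \in Z)].
  apply/subsetP => x; rewrite !inE => /andP[Qx tZ]; rewrite Qx.
  by apply: connect_trans tZ (connect1 _); apply/existsP; exists x; rewrite Qx !eqxx.
have := subset_leq_card closed; rewrite -!sum_card_fibers -/(arc_deg _ _).
have n0Z : n0 \in Z by rewrite inE connect0.
rewrite (bigD1 n0) // [X in _ <= X](bigD1 n0) //= leqNgt => /negP[].
rewrite -addSn; apply: leq_add surplus _; apply: leq_sum => y /andP[yZ _].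
by move: (no_deficit y); rewrite inE in yZ; rewrite yZ -leqNgt.
Qed.

Lemma reverse_on_setU1 F f g x0 x : x != x0 ->
  reverse_on (x0 |: F) f g x = reverse_on F f g x.
Proof. by rewrite /reverse_on in_setU1 => /negbTE ->. Qed.

Lemma arc_deg_reverse_on F t h n :
  arc_deg (reverse_on F t h) n + arc_deg (reverse_on F h t) n = arc_deg t n + arc_deg h n.
Proof.
rewrite /arc_deg !card_set_sum -!big_split; apply: eq_bigr => x _ /=.
by rewrite /reverse_on; case: (x \in F) => //; rewrite addnC.
Qed.

Lemma path_reversal t h x p : path (arc t h) x p -> uniq (x :: p) ->
  exists2 F : {set A}, F \subset [set y | Q y && (t y \in x :: p)] &
    forall n, arc_deg (reverse_on F t h) n + (x == n) = arc_deg t n + (last x p == n)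
           /\ arc_deg (reverse_on F h t) n + (last x p == n) = arc_deg h n + (x == n).
Proof.
elim: p x => [|z p IHp] x /=.
  move=> _ _; exists set0 => [|n]; first exact: sub0set; rewrite /arc_deg.
  by split; congr (_ + _); apply: eq_card => y; rewrite !inE /reverse_on inE.
move=> /andP[/existsP[x0 /andP[/andP[Qx0 /eqP tx0] /eqP hx0]] zp_path].
move=> /andP[x_notin zp_uniq]; have [F' F'_sub F'_deg] := IHp z zp_path zp_uniq.
have x0_notin : x0 \notin F'.
  by apply: contra x_notin => /(subsetP F'_sub); rewrite inE tx0 => /andP[].
exists (x0 |: F') => [|n].
  apply/subsetP => y; rewrite in_setU1 => /orP[/eqP->|/(subsetP F'_sub)].
    by rewrite inE Qx0 tx0 mem_head.
  by rewrite !inE => /andP[-> ->]; rewrite orbT.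
have [tails heads] := F'_deg n.
have := arc_deg_update n Qx0 (@reverse_on_setU1 F' t h x0).
have := arc_deg_update n Qx0 (@reverse_on_setU1 F' h t x0).
rewrite /reverse_on setU11 (negbTE x0_notin) -!/(reverse_on _ _ _) tx0 hx0.
lia.
Qed.
End ArcReversal.

Section EquitableColoring.
Variables (E V : finType) (P : pred E) (src dst : E -> V) (k : nat).
Local Notation port := (V * bool)%type.
Local Notation coloring := {ffun E -> 'I_k.+1}.

(* The port (v, false) holds the edges leaving v, the port (v, true) those entering v. *)
Definition at_port (n : port) x := (if n.2 then dst x else src x) == n.1.

Definition port_deg (col : coloring) (n : port) (c : 'I_k.+1) :=
  #|[set x | P x && at_port n x && (col x == c)]|.

Definition equitable (col : coloring) :=
  forall n a b, port_deg col n a <= (port_deg col n b).+1.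

Definition potential (col : coloring) := \sum_n \sum_c port_deg col n c ^ 2.

Lemma sum_port_deg col n : \sum_c port_deg col n c = #|[set x | P x && at_port n x]|.
Proof.
rewrite (eq_bigl (fun c => c \in [set: _ ])) => [|c]; last by rewrite inE.
by rewrite /port_deg sum_card_fibers; apply: eq_card => x; rewrite !inE andbT.
Qed.

Section AlternatingPaths.
Variables (al be : 'I_k.+1).
Hypothesis al_neq_be : al != be.

Definition ab_edge (col : coloring) x := P x && ((col x == al) || (col x == be)).

(* Edges coloured al run from their out-port to their in-port, edges coloured be back;
   swapping al and be on an edge reverses it. *)
Definition alt_tail (col : coloring) x : port :=
  if col x == al then (src x, false) else (dst x, true).

Definition alt_head (col : coloring) x : port :=
  if col x == al then (dst x, true) else (src x, false).

Definition swap_on (F : {set E}) (col : coloring) : coloring :=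
  [ffun x => if x \in F then (if col x == al then be else al) else col x].

Lemma arc_deg_alt_tail col n :
  arc_deg (ab_edge col) (alt_tail col) n = port_deg col n (if n.2 then be else al).
Proof.
rewrite /arc_deg /port_deg; apply: eq_card => x; rewrite !inE /ab_edge /alt_tail /at_port.
case: n => v []; case: eqP => [->|_] /=;
  by rewrite xpair_eqE /= ?(negbTE al_neq_be) ?andbT ?andbF // andbAC.
Qed.

Lemma arc_deg_alt_head col n :
  arc_deg (ab_edge col) (alt_head col) n = port_deg col n (if n.2 then al else be).
Proof.
rewrite /arc_deg /port_deg; apply: eq_card => x; rewrite !inE /ab_edge /alt_head /at_port.
case: n => v []; case: eqP => [->|_] /=;
  by rewrite xpair_eqE /= ?(negbTE al_neq_be) ?andbT ?andbF // andbAC.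
Qed.

Section Swap.
Variables (F : {set E}) (col : coloring).
Hypothesis F_ab : forall x, x \in F -> ab_edge col x.

Lemma swap_on_ab_edge : ab_edge (swap_on F col) =1 ab_edge col.
Proof.
move=> x; rewrite /ab_edge ffunE; case xF: (x \in F) => //; case/andP: (F_ab xF) => [-> ->].
by case: (col x == al); rewrite eqxx ?orbT.
Qed.

Lemma swap_on_alt_tail :
  alt_tail (swap_on F col) =1 reverse_on F (alt_tail col) (alt_head col).
Proof.
move=> x; rewrite /alt_tail /alt_head /reverse_on ffunE.
case xF: (x \in F) => //; case/andP: (F_ab xF) => [_ /orP[]/eqP->];
  by rewrite /= ?eqxx /= ?(eq_sym be) ?(negbTE al_neq_be) /= ?eqxx.
Qed.

Lemma swap_on_alt_head :
  alt_head (swap_on F col) =1 reverse_on F (alt_head col) (alt_tail col).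
Proof.
move=> x; rewrite /alt_tail /alt_head /reverse_on ffunE.
case xF: (x \in F) => //; case/andP: (F_ab xF) => [_ /orP[]/eqP->];
  by rewrite /= ?eqxx /= ?(eq_sym be) ?(negbTE al_neq_be) /= ?eqxx.
Qed.

Lemma swap_on_port_deg n c : c != al -> c != be ->
  port_deg (swap_on F col) n c = port_deg col n c.
Proof.
move=> c_al c_be; rewrite /port_deg; apply: eq_card => x; rewrite !inE ffunE.
case xF: (x \in F) => //; case/andP: (F_ab xF) => [_ /orP[]/eqP->];
  by rewrite /= ?eqxx /= ?(eq_sym be) ?(negbTE al_neq_be) /=
             !(eq_sym _ c) (negbTE c_al) (negbTE c_be) !andbF.
Qed.

End Swap.

Lemma sum_sqr_port_deg col n : \sum_c port_deg col n c ^ 2 =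
  \sum_(c | (c != al) && (c != be)) port_deg col n c ^ 2
  + arc_deg (ab_edge col) (alt_tail col) n ^ 2 + arc_deg (ab_edge col) (alt_head col) n ^ 2.
Proof.
rewrite arc_deg_alt_tail arc_deg_alt_head (bigD1 al) //= (bigD1 be) 1?eq_sym //=.
by case: n.2; lia.
Qed.

Lemma potential_decrease col n0 :
  (arc_deg (ab_edge col) (alt_head col) n0).+1 < arc_deg (ab_edge col) (alt_tail col) n0 ->
  exists col', potential col' < potential col.
Proof.
set Q := ab_edge col; set t := alt_tail col; set h := alt_head col => surplus.
have [y reach_y deficit] := reach_indeg_gt (ltnW surplus).
have y_neq_n0 : y != n0 by apply/eqP => y_n0; rewrite y_n0 in deficit; lia.
case/connectP: reach_y => p0 /shortenP[p p_path p_uniq _] y_last.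
have [F F_sub F_deg] := path_reversal p_path p_uniq.
have F_ab x : x \in F -> Q x by move/(subsetP F_sub); rewrite inE => /andP[].
exists (swap_on F col).
have sqr_swap n : \sum_c port_deg (swap_on F col) n c ^ 2 =
    \sum_(c | (c != al) && (c != be)) port_deg col n c ^ 2
    + arc_deg Q (reverse_on F t h) n ^ 2 + arc_deg Q (reverse_on F h t) n ^ 2.
  rewrite sum_sqr_port_deg; congr (_ + _ ^ 2 + _ ^ 2).
  - by apply: eq_bigr => c /andP[c_al c_be]; rewrite (swap_on_port_deg F_ab).
  - apply: eq_card => x; rewrite !inE swap_on_ab_edge // swap_on_alt_tail //.
  - apply: eq_card => x; rewrite !inE swap_on_ab_edge // swap_on_alt_head //.
have port_le n : \sum_c port_deg (swap_on F col) n c ^ 2 + (n == n0)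
                 <= \sum_c port_deg col n c ^ 2.
  rewrite sqr_swap sum_sqr_port_deg -/Q -/t -/h; case: (F_deg n); rewrite -y_last.
  case: (eqVneq n n0) => [->|_]; first by rewrite (negbTE y_neq_n0); nia.
  by case: (eqVneq y n) => [<-|_]; nia.
rewrite /potential (bigD1 n0) //= [X in _ < X](bigD1 n0) //= -addSn.
apply: leq_add; first by have := port_le n0; rewrite eqxx addn1.
by apply: leq_sum => n n_neq_n0; have := port_le n; rewrite (negbTE n_neq_n0) addn0.
Qed.

End AlternatingPaths.

Theorem exists_equitable_coloring : exists col : coloring, equitable col.
Proof.
case: (arg_minnP potential (isT : predT [ffun=> ord0 : 'I_k.+1])) => col _ col_min.
exists col => n a b; rewrite leqNgt; apply/negP => gap.
have a_neq_b : a != b by apply: contraTneq gap => ->; rewrite ltnNge leqnSn.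
have b_neq_a : b != a by rewrite eq_sym.
have [col' decr] : exists col', potential col' < potential col.
  case: n gap => v [] gap.
  - apply: (potential_decrease b_neq_a (n0 := (v, true))).
    by rewrite (arc_deg_alt_tail b_neq_a) (arc_deg_alt_head b_neq_a).
  - apply: (potential_decrease a_neq_b (n0 := (v, false))).
    by rewrite (arc_deg_alt_tail a_neq_b) (arc_deg_alt_head a_neq_b).
by have := col_min col' isT; rewrite leqNgt decr.
Qed.

End EquitableColoring.

Section MajorityColoring.
Variables (V : finType) (e : rel V).
Hypotheses (e_sym : symmetric e) (e_irr : irreflexive e).

Definition rank_lt (x y : V) := enum_rank x < enum_rank y.

(* Each edge {x, y} is represented once, by the pair ordered by enum_rank. *)
Definition edge_pair (p : V * V) := e p.1 p.2 && rank_lt p.1 p.2.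

Definition sort_pair (x y : V) := if rank_lt x y then (x, y) else (y, x).

Lemma rank_lt_swap x y : x != y -> rank_lt y x = ~~ rank_lt x y.
Proof.
by move=> xy; rewrite /rank_lt ltnNge leq_eqVlt val_eqE (inj_eq enum_rank_inj) (negbTE xy).
Qed.

Lemma sort_pairC x y : sort_pair x y = sort_pair y x.
Proof.
rewrite /sort_pair; case: (eqVneq x y) => [->//|xy].
by rewrite (rank_lt_swap xy); case: (rank_lt x y).
Qed.

Lemma card_adj_sort v (Q : pred (V * V)) :
  #|[set u | e v u && Q (sort_pair v u)]| =
  #|[set p | edge_pair p && (p.1 == v) && Q p]| + #|[set p | edge_pair p && (p.2 == v) && Q p]|.
Proof.
rewrite !card_set_sum !sum_pairE /=.
rewrite [X in _ = X + _](bigD1 v) //= [X in _ = _ + X + _]big1 => [|x /negbTE xv]; last first.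
  by apply: big1 => y _; rewrite xv andbF.
rewrite addn0 -big_split; apply: eq_bigr => u _ /=.
rewrite (bigD1 v) //= big1 => [|y /negbTE yv]; last by rewrite yv andbF.
rewrite addn0 !eqxx !andbT /edge_pair /sort_pair /=.
case: (eqVneq v u) => [<-|vu]; first by rewrite e_irr.
by rewrite (rank_lt_swap vu) (e_sym u); case: (rank_lt v u); rewrite ?andbT ?andbF ?addn0.
Qed.

Definition otail (R : {set V * V}) := reverse_on R fst snd.
Definition ohead (R : {set V * V}) := reverse_on R snd fst.
Definition outdeg R v := arc_deg edge_pair (otail R) v.
Definition indeg R v := arc_deg edge_pair (ohead R) v.

Lemma card_adj_oriented R v (Q : pred (V * V)) :
  #|[set u | e v u && Q (sort_pair v u)]| =
  #|[set p | edge_pair p && (otail R p == v) && Q p]| +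
  #|[set p | edge_pair p && (ohead R p == v) && Q p]|.
Proof.
have reorder f : #|[set p | edge_pair p && (f p == v) && Q p]| =
                 arc_deg [pred p | edge_pair p && Q p] f v.
  by apply: eq_card => p; rewrite !inE andbAC.
by rewrite card_adj_sort !reorder arc_deg_reverse_on.
Qed.

Lemma deg_oriented R v : deg e v = outdeg R v + indeg R v.
Proof.
have := card_adj_oriented R v predT.
have andbT_card (A : pred (V * V)) : #|[set p | A p && true]| = #|[set p | A p]|.
  by apply: eq_card => p; rewrite !inE andbT.
by rewrite !andbT_card => <-; apply: eq_card => u; rewrite !inE andbT.
Qed.

Definition nearly_balanced R :=
  forall v, outdeg R v <= (indeg R v).+2 /\ indeg R v <= (outdeg R v).+2.

Lemma exists_nearly_balanced_orientation : exists R, nearly_balanced R.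
Proof.
have [col col_eq] := exists_equitable_coloring edge_pair fst snd 1.
exists [set p | col p != ord0] => v.
set S := port_deg edge_pair fst snd col.
have out_eq : outdeg [set p | col p != ord0] v = S (v, false) ord0 + S (v, true) ord_max.
  rewrite /outdeg /arc_deg /S /port_deg !card_set_sum -big_split; apply: eq_bigr => p _ /=.
  rewrite /otail /reverse_on /at_port !inE /=.
  by case: edge_pair; case: (col p) => -[|[|//]] ?; rewrite -!val_eqE /= ?andbT ?andbF ?addn0.
have in_eq : indeg [set p | col p != ord0] v = S (v, false) ord_max + S (v, true) ord0.
  rewrite /indeg /arc_deg /S /port_deg !card_set_sum -big_split; apply: eq_bigr => p _ /=.
  rewrite /ohead /reverse_on /at_port !inE /=.
  by case: edge_pair; case: (col p) => -[|[|//]] ?; rewrite -!val_eqE /= ?andbT ?andbF ?addn0.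
have := col_eq (v, false) ord0 ord_max; have := col_eq (v, false) ord_max ord0.
have := col_eq (v, true) ord0 ord_max; have := col_eq (v, true) ord_max ord0.
rewrite out_eq in_eq -/S; lia.
Qed.

Lemma majority_of_equitable R (col : {ffun V * V -> 'I_3}) :
  nearly_balanced R -> equitable edge_pair (otail R) (ohead R) col ->
  forall v, 4 <= deg e v -> majority_colored e (fun x y => col (sort_pair x y)) v.
Proof.
move=> balanced col_eq v deg_ge4 a; set c := fun x y => _.
set T := port_deg edge_pair (otail R) (ohead R) col (v, false).
set H := port_deg edge_pair (otail R) (ohead R) col (v, true).
have col_deg_eq : col_deg e c v a = T a + H a := card_adj_oriented R v (fun p => col p == a).
have out_eq : \sum_b T b = outdeg R v := sum_port_deg _ _ _ _ _.
have in_eq : \sum_b H b = indeg R v := sum_port_deg _ _ _ _ _.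
have col_noncol : col_deg e c v a + noncol_deg e c v a = deg e v.
  rewrite /deg -(cardsID [set u | c v u == a] [set u | e v u]).
  by congr (_ + _); apply: eq_card => u; rewrite !inE // andbC.
have T_le : 3 * T a <= \sum_b T b + 2 := equitable_mul_le (col_eq (v, false) a).
have H_le : 3 * H a <= \sum_b H b + 2 := equitable_mul_le (col_eq (v, true) a).
have [] := balanced v; move: col_noncol deg_ge4 T_le H_le.
rewrite (deg_oriented R) col_deg_eq out_eq in_eq; lia.
Qed.

End MajorityColoring.

Theorem mainTheorem11 (V : finType) (e : rel V)
  (e_sym : symmetric e) (e_irr : irreflexive e) :
  exists c : V -> V -> 'I_3,
    (forall x y, c x y = c y x) /\
    (forall v : V, 4 <= deg e v -> majority_colored e c v).
Proof.
have [R balanced] := exists_nearly_balanced_orientation e.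
have [col col_eq] := exists_equitable_coloring (edge_pair e) (otail R) (ohead R) 2.
exists (fun x y => col (sort_pair x y)); split; first by move=> x y; rewrite sort_pairC.
exact: majority_of_equitable balanced col_eq.
Qed.
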